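(* For every $d\in\mathbb{N}$ and every game $\mathcal{M}\subseteq\mathbb{N}_0^d$, the sequence $(\mathcal{M}^i)_{i\ge0}$ converges, i.e. the limit game $\mathcal{M}^\infty$ exists, and $\mathcal{M}^\infty$ is reflexive.
   Context: For $d\in\mathbb{N}$ a game is a set $\mathcal{M}\subseteq\mathbb{N}_0^d$ of moves. From position $\boldsymbol x\in\mathbb{N}_0^d$ a player may move to $\boldsymbol y\in\mathbb{N}_0^d$ iff $\boldsymbol x-\boldsymbol y\in\mathcal{M}$. Misère play: a player who cannot move wins. If $\boldsymbol 0\in\mathcal{M}$, $P(\mathcal{M})=\varnothing$. Otherwise: a position is an N-position if it has no option or some option is a P-position; otherwise it is a P-position; $P(\mathcal{M})$ denotes the set of P-positions. The $\star$-operator is $\mathcal{M}^\star=P(\mathcal{M})$; $\mathcal{M}^0=\mathcal{M}$, $\mathcal{M}^i=(\mathcal{M}^{i-1})^\star$. The limit $\mathcal{M}^\infty$ exists if for every $\boldsymbol x\in\mathbb{N}_0^d$ either $\boldsymbol x\in\mathcal{M}^i$ for all sufficiently large $i$ or $\boldsymbol x\notin\mathcal{M}^i$ for all sufficiently large $i$; then $\mathcal{M}^\infty$ is the set of $\boldsymbol x$ of the first kind. A game is reflexive if $\mathcal{M}=\mathcal{M}^\star$. *)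

From mathcomp Require Import all_boot.
Set Implicit Arguments. Unset Strict Implicit. Unset Printing Implicit Defensive.

Definition pos (d : nat) := 'I_d -> nat.
Definition game (d : nat) := pos d -> Prop.

Definition zero_pos (d : nat) : pos d := fun _ => 0.

Definition is_option d (M : game d) (x y : pos d) : Prop :=
  (forall i, y i <= x i) /\ M (fun i => x i - y i).

(* N- and P-positions (misere), defined by mutual recursion on the
   (well-founded, since 0 notin M) option relation. *)
Inductive Npos d (M : game d) : pos d -> Prop :=
| Npos_noopt x : (forall y, ~ is_option M x y) -> Npos M x
| Npos_toP x y : is_option M x y -> Ppos M y -> Npos M x
with Ppos d (M : game d) : pos d -> Prop :=
| Ppos_intro x : (exists y, is_option M x y) ->
                 (forall y, is_option M x y -> Npos M y) -> Ppos M x.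

Definition Pset d (M : game d) : game d :=
  fun x => ~ M (@zero_pos d) /\ Ppos M x.

Fixpoint star_iter d (M : game d) (i : nat) : game d :=
  match i with 0 => M | i'.+1 => Pset (star_iter M i') end.

Definition limit_is d (M : game d) (L : game d) : Prop :=
  forall x : pos d, exists n, forall i, n <= i -> (star_iter M i x <-> L x).

Definition reflexive_game d (M : game d) : Prop := forall x, M x <-> Pset M x.

From mathcomp Require Import all_boot.
From Stdlib Require Import Classical FunctionalExtensionality.
Set Implicit Arguments. Unset Strict Implicit. Unset Printing Implicit Defensive.

(* Whether x is an N- or P-position of a game depends only on the moves lying
   in the box below x. Argue by induction on x: once the games M^i agree
   strictly below x for all large i, membership of x in M^(i+1) = P(M^i) is a
   fixed monotone function of membership of x in M^i (the move from x to 0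
   exists exactly when x is in M^i, and 0 is an N-position), and iterating a
   monotone map on booleans is eventually constant. Then M^oo agrees with a
   single M^n below x, so P(M^oo) and P(M^n) = M^(n+1) agree at x. *)

Lemma eventually_constant_of_monotone_step (P : nat -> Prop) N :
  (forall i j, N <= i -> N <= j -> (P i -> P j) -> P i.+1 -> P j.+1) ->
  exists n, forall i, n <= i -> (P i <-> P n).
Proof.
move=> step.
have [[i0 [Ni0 Pi0]] | noP] := classic (exists i, N <= i /\ P i); last first.
  by exists N => i Ni; split=> Pi; exfalso; apply: noP; [exists i | exists N].
have [Pi0S | nPi0S] := classic (P i0.+1).
  exists i0 => i le_i0i; split=> // _; rewrite -(subnKC le_i0i).
  elim: (i - i0) => [|t IHt]; first by rewrite addn0.
  by rewrite addnS; apply: (step i0) => //; apply: leq_trans Ni0 (leq_addr _ _).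
have nPS k : N <= k -> ~ P k.+1.
  by move=> Nk /(step k i0 Nk Ni0 (fun _ => Pi0)).
exists N.+1 => -[|i] // Ni.
by split=> Pi; exfalso; [apply: nPS Pi | apply: nPS (leqnn N) Pi].
Qed.

Lemma uniform_bound (I : finType) (P : I -> nat -> Prop) :
  (forall i m n, m <= n -> P i m -> P i n) -> (forall i, exists n, P i n) ->
  exists n, forall i, P i n.
Proof.
move=> Pmono Pex.
suff [n Pn] : exists n, forall i, i \in enum I -> P i n.
  by exists n => i; apply: Pn; rewrite mem_enum.
elim: (enum I) => [|a s [n Pn]]; first by exists 0.
have [m Pm] := Pex a.
exists (maxn n m) => i; rewrite inE => /predU1P[->|si].
  exact: Pmono (leq_maxr n m) Pm.
exact: Pmono (leq_maxl n m) (Pn i si).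
Qed.

Scheme Npos_mut := Induction for Npos Sort Prop
with Ppos_mut := Induction for Ppos Sort Prop.
Combined Scheme Npos_Ppos_mut from Npos_mut, Ppos_mut.

Section Positions.
Variable d : nat.
Implicit Types (M : game d) (x y z : pos d).

Definition lepos x y := forall i, x i <= y i.

Lemma lepos_refl x : lepos x x.
Proof. by []. Qed.

Lemma lepos_trans y x z : lepos x y -> lepos y z -> lepos x z.
Proof. by move=> xy yz i; apply: leq_trans (xy i) (yz i). Qed.

Lemma lepos_anti x y : lepos x y -> lepos y x -> x = y.
Proof.
by move=> xy yx; apply: functional_extensionality => i; apply/eqP; rewrite eqn_leq xy yx.
Qed.

Lemma zero_lepos x : lepos (@zero_pos d) x.
Proof. by []. Qed.

Lemma move_lepos x y : lepos (fun i => x i - y i) x.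
Proof. by move=> i; apply: leq_subr. Qed.

Lemma move_self x : (fun i => x i - x i) = @zero_pos d.
Proof. by apply: functional_extensionality => i; rewrite subnn. Qed.

Lemma move_eq_self x y : lepos y x -> (fun i => x i - y i) = x -> y = @zero_pos d.
Proof.
move=> yx e; apply: functional_extensionality => i.
by rewrite -(subKn (yx i)) (congr1 (fun f => f i) e) subnn.
Qed.

Lemma lt_coord_of_strictly_below x z : lepos z x -> z <> x -> exists j, z j < x j.
Proof.
move=> zx znx; apply: NNPP => nlt; apply: znx; apply: lepos_anti => // j.
by rewrite leqNgt; apply/negP => lt_zx; apply: nlt; exists j.
Qed.

Definition agree_below M M' x := forall z, lepos z x -> (M z <-> M' z).

Definition agree_strictly_below M M' x :=
  forall z, lepos z x -> z <> x -> (M z <-> M' z).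

Lemma agree_below_sym M M' x : agree_below M M' x -> agree_below M' M x.
Proof. by move=> MM' z zx; apply: iff_sym; apply: MM'. Qed.

Lemma agree_below_lepos M M' x y :
  agree_below M M' x -> lepos y x -> agree_below M M' y.
Proof. by move=> MM' yx z zy; apply: MM'; apply: lepos_trans zy yx. Qed.

Lemma is_option_agree_below M M' x y :
  agree_below M M' x -> is_option M x y -> is_option M' x y.
Proof. by move=> MM' [yx Mxy]; split=> //; apply/(MM' _ (move_lepos x y)). Qed.

Lemma NP_agree_below M M' :
  (forall x, Npos M x -> agree_below M M' x -> Npos M' x) /\
  (forall x, Ppos M x -> agree_below M M' x -> Ppos M' x).
Proof.
apply: Npos_Ppos_mut.
- move=> x noopt MM'; apply: Npos_noopt => y.
  by move/(is_option_agree_below (agree_below_sym MM')); apply: noopt.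
- move=> x y xy _ IHy MM'; apply: (Npos_toP (is_option_agree_below MM' xy)).
  exact/IHy/(agree_below_lepos MM' xy.1).
- move=> x [y0 xy0] _ IH MM'; apply: Ppos_intro.
    by exists y0; apply: is_option_agree_below MM' xy0.
  move=> y /(is_option_agree_below (agree_below_sym MM')) xy'.
  exact/(IH y xy')/(agree_below_lepos MM' xy'.1).
Qed.

Lemma Pset_agree_below M M' x : agree_below M M' x -> Pset M x -> Pset M' x.
Proof.
move=> MM' [M0 PMx]; split; first by move/(MM' _ (zero_lepos x)).
exact: (NP_agree_below M M').2 PMx MM'.
Qed.

Lemma Npos_zero M : ~ M (@zero_pos d) -> Npos M (@zero_pos d).
Proof. by move=> M0; apply: Npos_noopt => y [_ My]; apply: M0 My. Qed.

Lemma Ppos_has_option M x : Ppos M x -> exists y, is_option M x y.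
Proof. by case. Qed.

Lemma Ppos_options_Npos M x y : Ppos M x -> is_option M x y -> Npos M y.
Proof. by case=> {}x _; apply. Qed.

Lemma Pset_zero M : ~ Pset M (@zero_pos d).
Proof. by move=> [M0 /Ppos_has_option [y [_ My]]]; apply: M0 My. Qed.

Lemma Pset_transfer M M' x :
  agree_strictly_below M M' x -> (M x -> M' x) -> ~ M' (@zero_pos d) ->
  Pset M x -> Pset M' x.
Proof.
move=> MM' Mx M'0 [M0 PMx]; split=> //; apply: Ppos_intro.
  have [y [yx Mxy]] := Ppos_has_option PMx.
  exists y; split=> //.
  have [e|ne] := classic ((fun i => x i - y i) = x).
    by rewrite e; apply: Mx; rewrite -e.
  by apply/(MM' _ (move_lepos x y) ne).
move=> y' [y'x M'xy'].
have [->|y'_ne0] := classic (y' = @zero_pos d); first exact: Npos_zero.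
have y'_nex : y' <> x.
  by move=> e; apply: M'0; rewrite e move_self in M'xy'.
have xy' : is_option M x y'.
  split=> //; apply/(MM' _ (move_lepos x y')) => // e.
  exact/y'_ne0/(move_eq_self y'x e).
apply: (NP_agree_below M M').1 (Ppos_options_Npos PMx xy') _ => z zy'.
apply: MM'; first exact: lepos_trans zy' y'x.
by move=> e; apply: y'_nex; apply: lepos_anti => //; rewrite -e.
Qed.

Definition possum x := \sum_(i < d) x i.

Definition decr x j : pos d := fun i => if i == j then (x i).-1 else x i.

Lemma possum_decr x j : 0 < x j -> possum (decr x j) < possum x.
Proof.
move=> xj_gt0; rewrite /possum (bigD1 j) //= [X in _ < X](bigD1 j) //= /decr eqxx.
rewrite (eq_bigr x); last by move=> i /negbTE ->.
by rewrite ltn_add2r prednK.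
Qed.

Lemma lepos_decr x z j : lepos z x -> z j < x j -> lepos z (decr x j).
Proof.
move=> zx zj i; rewrite /decr; case: eqP => [->|_]; last exact: zx.
by rewrite -ltnS prednK // (leq_ltn_trans _ zj).
Qed.

Section Iteration.
Variable M : game d.
Notation S := (star_iter M).

Lemma star_iter_zero i : 0 < i -> ~ S i (@zero_pos d).
Proof. by case: i => // i _; apply: Pset_zero. Qed.

Definition stable_from n x := forall i, n <= i -> (S i x <-> S n x).

Lemma stable_from_mono m n x : m <= n -> stable_from m x -> stable_from n x.
Proof.
move=> mn Sm i ni; apply: iff_trans (Sm i (leq_trans mn ni)) _.
exact: iff_sym (Sm n mn).
Qed.

Lemma stable_from_agree n x i j :
  stable_from n x -> n <= i -> n <= j -> (S i x <-> S j x).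
Proof. by move=> Sn ni nj; apply: iff_trans (Sn i ni) (iff_sym (Sn j nj)). Qed.

Lemma stable_of_stable_strictly_below x N :
  0 < N -> (forall z, lepos z x -> z <> x -> stable_from N z) ->
  exists n, stable_from n x.
Proof.
move=> N_gt0 below.
apply: (eventually_constant_of_monotone_step (N := N)) => i j Ni Nj Sij.
apply: Pset_transfer Sij (star_iter_zero (leq_trans N_gt0 Nj)) => z zx znx.
exact: stable_from_agree (below z zx znx) Ni Nj.
Qed.

Lemma stable_downset x : exists n, forall z, lepos z x -> stable_from n z.
Proof.
suff : forall k x, possum x < k -> exists n, forall z, lepos z x -> stable_from n z.
  by apply; apply: ltnSn.
elim=> // k IHk {}x sx.
(* The positions strictly below x are those below some [decr x j]. *)
have [N below] : exists N, forall j, 0 < x j ->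
    forall z, lepos z (decr x j) -> stable_from N z.
  apply: uniform_bound => [j m n mn Pm xj z zx | j].
    exact: stable_from_mono mn (Pm xj z zx).
  have [_|xj_gt0] := posnP (x j); first by exists 0.
  have [n Pn] := IHk (decr x j) (leq_trans (possum_decr xj_gt0) sx).
  by exists n.
have strict z : lepos z x -> z <> x -> stable_from (maxn N 1) z.
  move=> zx znx; have [j zj] := lt_coord_of_strictly_below zx znx.
  have Nz := below j (leq_ltn_trans (leq0n _) zj) z (lepos_decr zx zj).
  exact: stable_from_mono (leq_maxl N 1) Nz.
have [n0 Sx] := stable_of_stable_strictly_below (leq_maxr N 1) strict.
exists (maxn (maxn N 1) n0) => z zx.
have [->|znx] := classic (z = x); first exact: stable_from_mono (leq_maxr _ _) Sx.
exact: stable_from_mono (leq_maxl _ _) (strict z zx znx).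
Qed.

Definition star_limit : game d := fun x => exists n, forall i, n <= i -> S i x.

Lemma star_limit_stable n x :
  stable_from n x -> forall i, n <= i -> (S i x <-> star_limit x).
Proof.
move=> Sn i ni; split=> [Six | [m Sm]].
  by exists n => j nj; apply/(stable_from_agree Sn ni nj).
apply/(stable_from_agree Sn ni (leq_maxl n m)).
exact: Sm (leq_maxr n m).
Qed.

Lemma star_limit_is : limit_is M star_limit.
Proof.
move=> x; have [n Sn] := stable_downset x.
by exists n; apply: star_limit_stable (Sn x (lepos_refl x)).
Qed.

Lemma star_limit_reflexive : reflexive_game star_limit.
Proof.
move=> x; have [n Sn] := stable_downset x.
have agree : agree_below (S n) star_limit x.
  by move=> z zx; apply: star_limit_stable (Sn z zx) _ (leqnn n).
apply: iff_trans (iff_sym (star_limit_stable (Sn x (lepos_refl x)) (leqnSn n))) _.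
by split; apply: Pset_agree_below; last apply: agree_below_sym.
Qed.

End Iteration.
End Positions.

Theorem theorem3 (d : nat) (M : game d) :
  0 < d ->
  exists Minf : game d, limit_is M Minf /\ reflexive_game Minf.
Proof.
move=> _; exists (star_limit M).
by split; [apply: star_limit_is | apply: star_limit_reflexive].
Qed.
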